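(* Consider the quantum walk on the half line induced by the birth–death chain with parameters $(p_j,q_j,r_j)_{j\ge0}$, and assume the chain is positive recurrent, i.e. $C_R<\infty$. Define $$\pi(j)=\frac{1}{1+C_R}\Big\{\delta_0(j)+(1-\delta_0(j))\frac{p_0\cdots p_{j-1}}{q_1\cdots q_j}\Big\},\quad j\ge0.$$ Then for every $j\ge0$ and every unit vector $\Psi_0=\sum_{k\ge0:|k-j|\le1}\alpha_k\delta_{(k,j)}\in\ell^2(A)$, and every $i\ge0$, $$\overline{\mu}^{(\Psi_0)}_\infty(i)\ \ge\ |\langle a_j,\Psi_0\rangle|^2\,\pi(i)\,\pi(j).$$ In particular, for $\Psi_0=a_j$ one has $\overline{\mu}^{(\Psi_0)}_\infty(i)>0$ for all $i$ (localization).
   Context: Half-line setting: $V=\mathbb{Z}_+=\{0,1,2,\dots\}$, with parameters $p_j,q_j,r_j\ge0$, $p_j+q_j+r_j=1$, $q_0=0$, $p_j>0$ for $j\ge0$, $q_j>0$ for $j\ge1$; from $j$ the walker moves to $j+1$, $j-1$, $j$ with probabilities $p_j,q_j,r_j$. The arc set $A$ consists of $(j+1,j)$ for $j\ge0$ (denoted $|j;R\rangle$), $(j-1,j)$ for $j\ge1$ (denoted $|j;L\rangle$), and the self loop arc $(j,j)$ whenever $r_j>0$ (denoted $|j;O\rangle$); arc $(u,v)$ goes from $v$ to $u$. The shift $S$ on $\ell^2(A)$ swaps $\delta_{(u,v)}\leftrightarrow\delta_{(v,u)}$, i.e. $|j;R\rangle\leftrightarrow|j+1;L\rangle$ and fixes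 $|j;O\rangle$. $a_j=\sqrt{q_j}|j;L\rangle+\sqrt{r_j}|j;O\rangle+\sqrt{p_j}|j;R\rangle$ (terms with zero coefficient omitted). $\Pi_A$ is the orthogonal projection onto the closed span of $\{a_j\}$, $C=2\Pi_A-I$, $U=SC$. For a unit $\Psi_0\in\ell^2(A)$, $P(X_t=i)=\sum_{J}|\langle i;J|U^t\Psi_0\rangle|^2$ (sum over the arcs out of $i$) and $\overline{\mu}^{(\Psi_0)}_\infty(i)=\lim_{T\to\infty}\frac1T\sum_{t=0}^{T-1}P(X_t=i)$. $C_R=\sum_{j\ge1}\frac{p_0\cdots p_{j-1}}{q_1\cdots q_j}$. *)

From Stdlib Require Import Reals.
Open Scope R_scope.

Record Cx := mkCx { Cre : R; Cim : R }.
Definition C0 : Cx := mkCx 0 0.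
Definition Cadd (z w : Cx) : Cx := mkCx (Cre z + Cre w) (Cim z + Cim w).
Definition Csub (z w : Cx) : Cx := mkCx (Cre z - Cre w) (Cim z - Cim w).
Definition Cscal (a : R) (z : Cx) : Cx := mkCx (a * Cre z) (a * Cim z).
Definition Cnorm2 (z : Cx) : R := Cre z * Cre z + Cim z * Cim z.

(* Arcs out of vertex j : |j;L> = (j-1,j), |j;O> = (j,j), |j;R> = (j+1,j). *)
Inductive Dir := DL | DO | DR.

(* A vector of l^2(A): Psi j d = <j;d|Psi>.  Entries on non-existent arcs
   (|0;L>, and |j;O> when r_j = 0) are kept equal to 0. *)
Definition vec := nat -> Dir -> Cx.

Section Walk.
Variables p q r : nat -> R.

(* coefficient of a_j on |j;d> *)
Definition amp (j : nat) (d : Dir) : R :=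
  match d with DL => sqrt (q j) | DO => sqrt (r j) | DR => sqrt (p j) end.

Definition avec (j : nat) : vec :=
  fun k d => if Nat.eqb k j then mkCx (amp j d) 0 else C0.

(* <a_j, Psi> (a_j is real, so no conjugation is needed on it) *)
Definition inner_a (j : nat) (Psi : vec) : Cx :=
  Cadd (Cscal (amp j DL) (Psi j DL))
       (Cadd (Cscal (amp j DO) (Psi j DO)) (Cscal (amp j DR) (Psi j DR))).

(* Pi_A Psi = sum_j <a_j,Psi> a_j  (orthogonal projection onto the closed
   span of the orthonormal family {a_j}, which have disjoint supports) *)
Definition PiA (Psi : vec) : vec :=
  fun j d => Cscal (amp j d) (inner_a j Psi).

Definition Coin (Psi : vec) : vec :=
  fun j d => Csub (Cscal 2 (PiA Psi j d)) (Psi j d).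

Definition Shift (Psi : vec) : vec :=
  fun j d => match d with
             | DR => Psi (S j) DL
             | DL => match j with O => C0 | S k => Psi k DR end
             | DO => Psi j DO
             end.

Definition Uop (Psi : vec) : vec := Shift (Coin Psi).

Fixpoint Upow (t : nat) (Psi : vec) : vec :=
  match t with O => Psi | S t' => Uop (Upow t' Psi) end.

Definition prob (Psi0 : vec) (t i : nat) : R :=
  Cnorm2 (Upow t Psi0 i DL) + Cnorm2 (Upow t Psi0 i DO) + Cnorm2 (Upow t Psi0 i DR).

(* (1/T) sum_{t=0}^{T-1} P(X_t = i), with T = n+1 *)
Definition cesaro (Psi0 : vec) (i : nat) (n : nat) : R :=
  / INR (S n) * sum_f_R0 (fun t => prob Psi0 t i) n.

Fixpoint prodp (j : nat) : R :=
  match j with O => 1 | S k => prodp k * p k end.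
Fixpoint prodq (j : nat) : R :=
  match j with O => 1 | S k => prodq k * q (S k) end.

(* term j+1 of C_R = sum_{j>=1} p_0...p_{j-1}/(q_1...q_j) *)
Definition CR_term (k : nat) : R := prodp (S k) / prodq (S k).

Definition pi_stat (CR : R) (j : nat) : R :=
  / (1 + CR) * (match j with O => 1 | _ => prodp j / prodq j end).

End Walk.

(* Psi0 = alpha_{j-1} |j;L> + alpha_j |j;O> + alpha_{j+1} |j;R> *)
Definition init (j : nat) (bL bO bR : Cx) : vec :=
  fun k d => if Nat.eqb k j then match d with DL => bL | DO => bO | DR => bR end
             else C0.

(** The walk operator U = S(2Π_A − I) has real matrix entries, so it acts
    separately on the real and imaginary parts of Ψ₀; for a real, finitely
    supported u write x_t = U^t u.  One step of U preserves inner products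
    except for the arc |0;L⟩, which it never feeds.

    1. Mean ergodic theorem.  A symmetric, shift-invariant, positive
       semidefinite kernel G(s,t) induces a seminorm on finite formal
       combinations of times, for which the Cesàro averages are Cauchy (von
       Neumann: compare the averages with a near-minimiser of the norm on the
       combinations of total weight 1 and use the parallelogram law).  Applied
       to ⟨x_s,x_t⟩ and to its square (the Gram kernel of x_t ⊗ x_t), this
       gives convergence of the Cesàro means of x_t(i,d) and of x_t(i,d)².
    2. The stationary vector.  Detailed balance makes Φ = Σ_k √π(k) a_k a
       U-fixed unit vector, and every U-fixed vector vanishing on |0;L⟩ is a
       multiple of Φ.  The coordinatewise limit of the averages is U-fixed;
       as ⟨Φ, x_t⟩ = ⟨Φ, u⟩ and the averages converge in norm, it is ⟨Φ,u⟩Φ.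
    3. Jensen.  The mean of squares dominates the square of the mean, so the
       limit of the Cesàro means of P(X_t = i) is at least ⟨Φ,u⟩² π(i) for the
       real and imaginary parts; for Ψ₀ concentrated at j, ⟨Φ,u⟩ = √π(j)⟨a_j,u⟩,
       which yields |⟨a_j,Ψ₀⟩|² π(i) π(j), and 1·π(i)π(j) > 0 for Ψ₀ = a_j. *)

From Stdlib Require Import Reals Lra Lia List FunctionalExtensionality.
Open Scope R_scope.

(* A quadratic form in λ that is nonnegative everywhere has a nonpositive
   discriminant; this is the core of every Cauchy–Schwarz inequality below. *)
Lemma discriminant_le (a b c : R) :
  0 <= a -> 0 <= c -> (forall l, 0 <= a + 2 * l * b + l * l * c) -> b * b <= a * c.
Proof.
  intros Ha Hc H.
  destruct (Rle_lt_or_eq_dec 0 c Hc) as [Hc'|<-].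
  - specialize (H (- b / c)).
    replace (a + 2 * (- b / c) * b + (- b / c) * (- b / c) * c)
      with ((a * c - b * b) / c) in H by (field; lra).
    apply Rmult_le_compat_r with (r := c) in H; [|lra].
    unfold Rdiv in H. rewrite Rmult_assoc, Rinv_l, Rmult_1_r in H by lra. lra.
  - destruct (Req_dec b 0) as [->|Hb]; [lra|].
    specialize (H (- (a + 1) / (2 * b))).
    replace (a + 2 * (- (a + 1) / (2 * b)) * b + (- (a + 1) / (2 * b)) * (- (a + 1) / (2 * b)) * 0)
      with (-1) in H by (field; lra).
    lra.
Qed.

Lemma sqrt_le_of_le_square (x y : R) : 0 <= y -> x <= y * y -> sqrt x <= y.
Proof. intros Hy H. rewrite <- (sqrt_square y Hy). apply sqrt_le_1_alt; lra. Qed.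

Lemma sqrt_add_square_le (a b : R) : 0 <= a -> 0 <= b -> sqrt (a + b * b) <= sqrt a + b.
Proof.
  intros Ha Hb. apply sqrt_le_of_le_square; [generalize (sqrt_pos a); lra|].
  generalize (sqrt_sqrt a Ha) (sqrt_pos a). nra.
Qed.

Lemma sum_linear (f g : nat -> R) a N :
  sum_f_R0 (fun k => a * f k + g k) N = a * sum_f_R0 f N + sum_f_R0 g N.
Proof. induction N; simpl; [ring|]. rewrite IHN; ring. Qed.

Lemma sum_zero N : sum_f_R0 (fun _ => 0) N = 0.
Proof. rewrite sum_cte; ring. Qed.

Lemma sum_telescope (f : nat -> R) T : sum_f_R0 (fun t => f t - f (S t)) T = f 0%nat - f (S T).
Proof. induction T; simpl; [ring|]. rewrite IHT; ring. Qed.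

Lemma sum_term_le (f : nat -> R) i N :
  (forall k, 0 <= f k) -> (i <= N)%nat -> f i <= sum_f_R0 f N.
Proof.
  intros Hf Hi. induction N.
  - replace i with 0%nat by lia. simpl; lra.
  - destruct (Nat.eq_dec i (S N)) as [->|Hne]; simpl.
    + generalize (cond_pos_sum f N Hf); lra.
    + generalize (IHN ltac:(lia)) (Hf (S N)); lra.
Qed.

Lemma sum_nonneg_mono (f : nat -> R) N M :
  (forall k, 0 <= f k) -> (N <= M)%nat -> sum_f_R0 f N <= sum_f_R0 f M.
Proof. intros Hf H. induction H; [lra|]. simpl. generalize (Hf (S m)); lra. Qed.

Lemma cesaro_square_le (f : nat -> R) T :
  (/ INR (S T) * sum_f_R0 f T) * (/ INR (S T) * sum_f_R0 f T)
  <= / INR (S T) * sum_f_R0 (fun t => f t * f t) T.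
Proof.
  set (n := INR (S T)). assert (Hn : 0 < n) by (apply lt_0_INR; lia).
  set (m := / n * sum_f_R0 f T).
  assert (H : 0 <= sum_f_R0 (fun t => (f t - m) * (f t - m)) T)
    by (apply cond_pos_sum; intro t; apply Rle_0_sqr).
  rewrite (sum_eq _ (fun t => (-2 * m) * f t + (f t * f t + m * m))) in H by (intros; ring).
  rewrite sum_linear, plus_sum, sum_cte in H. fold n in H.
  replace (sum_f_R0 f T) with (n * m) in H by (unfold m; field; lra).
  apply (Rmult_le_reg_l n); auto.
  replace (n * (/ n * sum_f_R0 (fun t => f t * f t) T))
    with (sum_f_R0 (fun t => f t * f t) T) by (field; lra).
  nra.
Qed.

Lemma mean_plus (f g : nat -> R) T :
  / INR (S T) * sum_f_R0 (fun t => f t + g t) T = / INR (S T) * sum_f_R0 f T + / INR (S T) * sum_f_R0 g T.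
Proof. rewrite plus_sum; ring. Qed.

Lemma Un_cv_const c : Un_cv (fun _ => c) c.
Proof. intros e He. exists 0%nat. intros. unfold Rdist. rewrite Rminus_diag, Rabs_R0; auto. Qed.

Lemma Un_cv_ext u v l : (forall n, u n = v n) -> Un_cv u l -> Un_cv v l.
Proof. intros H Hu e He. destruct (Hu e He) as [N HN]. exists N. intros n Hn. rewrite <- H; auto. Qed.

Lemma Un_cv_le_eventually a A N d : Un_cv a A -> (forall n, (N <= n)%nat -> a n <= d) -> A <= d.
Proof.
  intros Ha H. destruct (Rle_dec A d) as [|Hn]; auto. exfalso.
  destruct (Ha (A - d)) as [M HM]; [lra|].
  specialize (HM (M + N)%nat ltac:(lia)). specialize (H (M + N)%nat ltac:(lia)).
  unfold Rdist in HM. apply Rabs_def2 in HM. lra.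
Qed.

Lemma inv_succ_small (c eps : R) : 0 <= c -> 0 < eps ->
  exists N, forall T, (N <= T)%nat -> c * / INR (S T) <= eps.
Proof.
  intros Hc He.
  destruct (archimed_cor1 (eps / (c + 1))) as [N [HN HN0]]; [apply Rdiv_lt_0_compat; lra|].
  exists N. intros T HT.
  assert (HTN : / INR (S T) <= / INR N)
    by (apply Rinv_le_contravar; [apply lt_0_INR; lia | apply le_INR; lia]).
  assert (Hi : 0 < / INR (S T)) by (apply Rinv_0_lt_compat, lt_0_INR; lia).
  assert (c * (eps / (c + 1)) <= eps).
  { unfold Rdiv. apply (Rmult_le_reg_r (c + 1)); [lra|].
    replace (c * (eps * / (c + 1)) * (c + 1)) with (c * eps) by (field; lra). nra. }
  apply Rle_trans with (c * / INR N); [apply Rmult_le_compat_l; lra|].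
  apply Rle_trans with (c * (eps / (c + 1))); [apply Rmult_le_compat_l; lra | assumption].
Qed.

(** Finite formal combinations of time indices *)

(* A list [(a_1,s_1); ...] stands for the formal combination Σ a_i e_{s_i};
   [Ev f l] evaluates it against f : ℕ → ℝ. *)
Definition fcomb := list (R * nat).
Definition Ev (f : nat -> R) (l : fcomb) : R :=
  fold_right (fun p acc => fst p * f (snd p) + acc) 0 l.
Definition fscale (k : R) (l : fcomb) : fcomb := map (fun p => (k * fst p, snd p)) l.
Definition fneg (l : fcomb) : fcomb := fscale (-1) l.
Definition fshift (r : nat) (l : fcomb) : fcomb := map (fun p => (fst p, (snd p + r)%nat)) l.
Definition fsum (F : nat -> fcomb) (T : nat) : fcomb := flat_map F (seq 0 (S T)).
Definition fbind (F : nat -> fcomb) (l : fcomb) : fcomb :=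
  flat_map (fun p => fscale (fst p) (F (snd p))) l.
Definition avg (T : nat) : fcomb := fsum (fun t => (/ INR (S T), t) :: nil) T.
Definition fequiv (l w : fcomb) : Prop := forall f, Ev f l = Ev f w.

Lemma Ev_app f l w : Ev f (l ++ w) = Ev f l + Ev f w.
Proof. induction l as [|[a s] l IH]; unfold Ev in *; simpl in *; [lra|]. rewrite IH; lra. Qed.

Lemma Ev_scale f k l : Ev f (fscale k l) = k * Ev f l.
Proof. induction l as [|[a s] l IH]; unfold Ev in *; simpl in *; [lra|]. rewrite IH; ring. Qed.

Lemma Ev_neg f l : Ev f (fneg l) = - Ev f l.
Proof. unfold fneg; rewrite Ev_scale; ring. Qed.

Lemma Ev_shift f r l : Ev f (fshift r l) = Ev (fun s => f (s + r)%nat) l.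
Proof. induction l as [|[a s] l IH]; unfold Ev in *; simpl in *; [lra|]. rewrite IH; ring. Qed.

Lemma Ev_linear f g a l : Ev (fun s => a * f s + g s) l = a * Ev f l + Ev g l.
Proof. induction l as [|[b s] l IH]; unfold Ev in *; simpl in *; [lra|]. rewrite IH; ring. Qed.

Lemma Ev_mult_l f k l : Ev (fun s => k * f s) l = k * Ev f l.
Proof. induction l as [|[b s] l IH]; unfold Ev in *; simpl in *; [lra|]. rewrite IH; ring. Qed.

Lemma Ev_ext_in f g l : (forall s, In s (map snd l) -> f s = g s) -> Ev f l = Ev g l.
Proof. intros H; induction l as [|[b s] l IH]; unfold Ev in *; simpl in *; [lra|]. rewrite IH, H; auto. Qed.

Lemma Ev_ext f g l : (forall s, f s = g s) -> Ev f l = Ev g l.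
Proof. intros H; apply Ev_ext_in; auto. Qed.

Lemma Ev_plus f g l : Ev (fun s => f s + g s) l = Ev f l + Ev g l.
Proof. rewrite <- (Rmult_1_l (Ev f l)), <- Ev_linear. apply Ev_ext; intros; ring. Qed.

Lemma Ev_swap (F : nat -> nat -> R) l w :
  Ev (fun s => Ev (fun t => F s t) w) l = Ev (fun t => Ev (fun s => F s t) l) w.
Proof.
  induction l as [|[a s] l IH].
  - unfold Ev at 1; simpl.
    induction w as [|[b t] w IHw]; unfold Ev in *; simpl in *; [lra|]. rewrite <- IHw; ring.
  - change (a * Ev (fun t => F s t) w + Ev (fun s0 => Ev (fun t => F s0 t) w) l
            = Ev (fun t => Ev (fun s0 => F s0 t) ((a, s) :: l)) w).
    rewrite IH, <- Ev_linear. reflexivity.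
Qed.

Lemma Ev_sum_swap (F : nat -> nat -> R) l T :
  Ev (fun s => sum_f_R0 (F s) T) l = sum_f_R0 (fun r => Ev (fun s => F s r) l) T.
Proof. induction T; cbn; [reflexivity|]. rewrite Ev_plus, IHT; reflexivity. Qed.

Lemma Ev_fsum f F T : Ev f (fsum F T) = sum_f_R0 (fun r => Ev f (F r)) T.
Proof.
  induction T; unfold fsum in *; cbn [sum_f_R0].
  - change (flat_map F (seq 0 1)) with (F 0%nat ++ nil). rewrite app_nil_r; reflexivity.
  - rewrite seq_S, flat_map_app, Ev_app, IHT.
    change (flat_map F ((0 + S T)%nat :: nil)) with (F (S T) ++ nil). rewrite app_nil_r; reflexivity.
Qed.

Lemma Ev_fbind f F l : Ev f (fbind F l) = Ev (fun s => Ev f (F s)) l.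
Proof.
  induction l as [|[a s] l IH]; [reflexivity|]. unfold fbind in *. simpl flat_map.
  rewrite Ev_app, Ev_scale, IH. reflexivity.
Qed.

Lemma Ev_avg f T : Ev f (avg T) = / INR (S T) * sum_f_R0 f T.
Proof. unfold avg. rewrite Ev_fsum, scal_sum. apply sum_eq; intros; cbn; ring. Qed.

Lemma Ev_avg_one T : Ev (fun _ => 1) (avg T) = 1.
Proof. rewrite Ev_avg, sum_cte. field. apply not_0_INR; lia. Qed.

(** Mean ergodic theorem for stationary kernels *)

(* G(s,t) plays the role of the inner product ⟨x_s, x_t⟩ of the orbit of an
   isometry: it is symmetric, invariant under the simultaneous shift of
   both times, and positive semidefinite on formal combinations.  Von
   Neumann's argument then shows that the Cesàro averages are Cauchy for
   the induced seminorm. *)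
Section MeanErgodic.
Variable G : nat -> nat -> R.
Hypothesis G_sym : forall s t, G s t = G t s.
Hypothesis G_shift : forall s t, G (S s) (S t) = G s t.

Definition B (l w : fcomb) : R := Ev (fun s => Ev (fun t => G s t) w) l.
Hypothesis B_psd : forall l, 0 <= B l l.

Lemma B_sym l w : B l w = B w l.
Proof. unfold B. rewrite Ev_swap. apply Ev_ext; intros; apply Ev_ext; intros; apply G_sym. Qed.
Lemma B_app_l l l' w : B (l ++ l') w = B l w + B l' w.
Proof. apply Ev_app. Qed.
Lemma B_app_r l w w' : B l (w ++ w') = B l w + B l w'.
Proof. unfold B. rewrite <- Ev_plus. apply Ev_ext; intros; apply Ev_app. Qed.
Lemma B_scale_l k l w : B (fscale k l) w = k * B l w.
Proof. apply Ev_scale. Qed.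
Lemma B_scale_r k l w : B l (fscale k w) = k * B l w.
Proof. rewrite B_sym, B_scale_l, B_sym; auto. Qed.
Lemma B_shift r l w : B (fshift r l) (fshift r w) = B l w.
Proof.
  assert (HG : forall s t, G (s + r) (t + r) = G s t).
  { induction r; intros s t; [rewrite !Nat.add_0_r; auto|]. rewrite <- !plus_n_Sm, G_shift; auto. }
  unfold B. rewrite Ev_shift. apply Ev_ext; intros s. rewrite Ev_shift. apply Ev_ext; intros; apply HG.
Qed.
Lemma B_fequiv l w : fequiv l w -> B l l = B w w.
Proof. intros H. transitivity (B w l); [apply H|]. rewrite B_sym. apply H. Qed.

Definition nrm (l : fcomb) : R := sqrt (B l l).
Lemma nrm_nonneg l : 0 <= nrm l. Proof. apply sqrt_pos. Qed.
Lemma nrm_sq l : nrm l * nrm l = B l l. Proof. apply sqrt_sqrt, B_psd. Qed.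

Lemma B_cauchy_schwarz l w : B l w <= nrm l * nrm w.
Proof.
  assert (CS : B l w * B l w <= B l l * B w w).
  { apply discriminant_le; try apply B_psd. intros lam. generalize (B_psd (l ++ fscale lam w)).
    rewrite B_app_l, !B_app_r, !B_scale_l, !B_scale_r, (B_sym w l). lra. }
  rewrite <- nrm_sq, <- (nrm_sq w) in CS.
  assert (0 <= nrm l * nrm w) by (apply Rmult_le_pos; apply nrm_nonneg).
  destruct (Rle_dec (B l w) (nrm l * nrm w)) as [|Hn]; [assumption|nra].
Qed.
Lemma nrm_app l w : nrm (l ++ w) <= nrm l + nrm w.
Proof.
  apply sqrt_le_of_le_square; [generalize (nrm_nonneg l) (nrm_nonneg w); lra|].
  rewrite B_app_l, !B_app_r, (B_sym w l). generalize (B_cauchy_schwarz l w) (nrm_sq l) (nrm_sq w). nra.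
Qed.
Lemma nrm_scale k l : nrm (fscale k l) = Rabs k * nrm l.
Proof.
  unfold nrm. rewrite B_scale_l, B_scale_r, <- Rmult_assoc, sqrt_mult; [|nra|apply B_psd].
  rewrite <- (sqrt_Rsqr_abs k). reflexivity.
Qed.
Lemma nrm_shift r l : nrm (fshift r l) = nrm l.
Proof. unfold nrm; rewrite B_shift; auto. Qed.
Lemma nrm_fequiv l w : fequiv l w -> nrm l = nrm w.
Proof. intros; unfold nrm; rewrite (B_fequiv l w); auto. Qed.
Lemma nrm_nil : nrm nil = 0.
Proof. apply sqrt_0. Qed.
Lemma nrm_single a s : nrm ((a, s) :: nil) = Rabs a * sqrt (G 0 0).
Proof.
  assert (Hd : forall n, G n n = G 0 0) by (induction n; auto; rewrite G_shift; auto).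
  unfold nrm, B, Ev; cbn. rewrite Hd.
  replace (a * (a * G 0 0 + 0) + 0) with ((a * a) * G 0 0) by ring.
  rewrite sqrt_mult; [|nra|].
  - rewrite <- (sqrt_Rsqr_abs a). reflexivity.
  - generalize (B_psd ((1, 0%nat) :: nil)); unfold B, Ev; cbn. lra.
Qed.
Lemma nrm_fsum F T : nrm (fsum F T) <= sum_f_R0 (fun r => nrm (F r)) T.
Proof.
  induction T; unfold fsum in *; cbn [sum_f_R0].
  - change (flat_map F (seq 0 1)) with (F 0%nat ++ nil). rewrite app_nil_r. lra.
  - rewrite seq_S, flat_map_app.
    change (flat_map F ((0 + S T)%nat :: nil)) with (F (S T) ++ nil). rewrite app_nil_r.
    generalize (nrm_app (flat_map F (seq 0 (S T))) (F (S T))). lra.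
Qed.
Lemma nrm_fbind F l :
  nrm (fbind F l) <= fold_right (fun p acc => Rabs (fst p) * nrm (F (snd p)) + acc) 0 l.
Proof.
  induction l as [|[a s] l IH]; unfold fbind in *; simpl; [rewrite nrm_nil; lra|].
  eapply Rle_trans; [apply nrm_app|]. rewrite nrm_scale. simpl in IH. lra.
Qed.

Definition avg_defect (T s : nat) : fcomb := avg T ++ fneg (fshift s (avg T)).

Lemma nrm_avg_defect_1 T : nrm (avg_defect T 1) <= 2 * sqrt (G 0 0) / INR (S T).
Proof.
  set (c := / INR (S T)).
  assert (Hc : 0 < c) by (unfold c; apply Rinv_0_lt_compat, lt_0_INR; lia).
  (* the average minus its unit shift telescopes to (e_0 - e_{T+1})/(T+1) *)
  assert (E : fequiv (avg_defect T 1) (((c, 0%nat) :: nil) ++ ((- c, S T) :: nil))).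
  { intros f. unfold avg_defect. rewrite Ev_app, Ev_neg, Ev_shift, !Ev_avg. fold c.
    change (Ev f (((c, 0%nat) :: nil) ++ ((- c, S T) :: nil))) with (c * f 0%nat + (- c * f (S T) + 0)).
    assert (Htel : sum_f_R0 f T - sum_f_R0 (fun s => f (s + 1)%nat) T = f 0%nat - f (S T)).
    { rewrite <- minus_sum, <- sum_telescope. apply sum_eq; intros; rewrite Nat.add_1_r; reflexivity. }
    replace (c * sum_f_R0 f T + - (c * sum_f_R0 (fun s => f (s + 1)%nat) T))
      with (c * (sum_f_R0 f T - sum_f_R0 (fun s => f (s + 1)%nat) T)) by ring.
    rewrite Htel; ring. }
  rewrite (nrm_fequiv _ _ E). eapply Rle_trans; [apply nrm_app|].
  rewrite !nrm_single, Rabs_Ropp, Rabs_right by lra. unfold c, Rdiv. lra.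
Qed.

Lemma nrm_avg_defect T s : nrm (avg_defect T s) <= INR s * (2 * sqrt (G 0 0) / INR (S T)).
Proof.
  induction s.
  - assert (E : fequiv (avg_defect T 0) nil).
    { intros f. unfold avg_defect. rewrite Ev_app, Ev_neg, Ev_shift.
      rewrite (Ev_ext (fun s => f (s + 0)%nat) f) by (intros; rewrite Nat.add_0_r; auto).
      unfold Ev at 3; simpl. lra. }
    rewrite (nrm_fequiv _ _ E), nrm_nil. simpl. lra.
  - (* defect by s+1 = defect by s + (defect by 1, shifted by s) *)
    assert (E : fequiv (avg_defect T (S s)) (avg_defect T s ++ fshift s (avg_defect T 1))).
    { intros f. unfold avg_defect. rewrite !Ev_app, !Ev_neg, !Ev_shift, !Ev_app, !Ev_neg, !Ev_shift.
      rewrite (Ev_ext (fun s0 => f (s0 + 1 + s)%nat) (fun s0 => f (s0 + S s)%nat))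
        by (intros; f_equal; lia). ring. }
    rewrite (nrm_fequiv _ _ E). eapply Rle_trans; [apply nrm_app|].
    rewrite nrm_shift, S_INR. generalize (nrm_avg_defect_1 T). lra.
Qed.

Definition shift_avg (T : nat) (l : fcomb) : fcomb := fsum (fun r => fscale (/ INR (S T)) (fshift r l)) T.

Lemma nrm_shift_avg T l : nrm (shift_avg T l) <= nrm l.
Proof.
  eapply Rle_trans; [apply nrm_fsum|].
  rewrite (sum_eq _ (fun _ => / INR (S T) * nrm l)).
  - rewrite sum_cte. right. field. apply not_0_INR; lia.
  - intros r _. rewrite nrm_scale, nrm_shift, Rabs_right; auto.
    left; apply Rinv_0_lt_compat, lt_0_INR; lia.
Qed.

(* Σ |a_i| s_i, the cost of moving the combination l back to time 0. *)
Definition fcost (l : fcomb) : R := fold_right (fun p acc => Rabs (fst p) * INR (snd p) + acc) 0 l.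
Lemma fcost_nonneg l : 0 <= fcost l.
Proof. induction l; simpl; [lra|]. generalize (Rabs_pos (fst a)) (pos_INR (snd a)); nra. Qed.

(* Key estimate: for every combination l of total weight 1, the Cesàro
   average is close to an average of shifts of l, whence
   ‖avg T‖ ≤ ‖l‖ + O(1/T). *)
Lemma nrm_avg_le T l : Ev (fun _ => 1) l = 1 ->
  nrm (avg T) <= nrm l + fcost l * (2 * sqrt (G 0 0) / INR (S T)).
Proof.
  intros Hs.
  assert (E : fequiv (avg T) (fbind (avg_defect T) l ++ shift_avg T l)).
  { intros f. rewrite Ev_app, Ev_fbind. unfold shift_avg. rewrite Ev_fsum.
    rewrite (sum_eq _ (fun r => / INR (S T) * Ev (fun s => f (s + r)%nat) l))
      by (intros r _; rewrite Ev_scale, Ev_shift; auto).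
    rewrite (Ev_ext (fun s => Ev f (avg_defect T s))
               (fun s => Ev f (avg T) * 1 + (- / INR (S T) * sum_f_R0 (fun t => f (s + t)%nat) T))).
    2:{ intros s. unfold avg_defect. rewrite Ev_app, Ev_neg, Ev_shift, (Ev_avg (fun s0 => f (s0 + s)%nat)).
        rewrite (sum_eq (fun s0 => f (s0 + s)%nat) (fun t => f (s + t)%nat)) by (intros; f_equal; lia).
        ring. }
    rewrite Ev_linear, Hs, Ev_mult_l, (Ev_sum_swap (fun s t => f (s + t)%nat)).
    rewrite (sum_eq (fun r => / INR (S T) * Ev (fun s => f (s + r)%nat) l)
                    (fun r => Ev (fun s => f (s + r)%nat) l * / INR (S T))) by (intros; ring).
    rewrite <- scal_sum. ring. }
  rewrite (nrm_fequiv _ _ E). eapply Rle_trans; [apply nrm_app|].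
  assert (Hdef : nrm (fbind (avg_defect T) l) <= fcost l * (2 * sqrt (G 0 0) / INR (S T))).
  { eapply Rle_trans; [apply nrm_fbind|]. unfold fcost.
    set (K := 2 * sqrt (G 0 0) / INR (S T)).
    assert (HK : forall s, nrm (avg_defect T s) <= INR s * K) by (intros; apply nrm_avg_defect).
    clearbody K. clear E Hs.
    induction l as [|[a s] l IH]; simpl; [lra|].
    generalize (HK s) (Rabs_pos a). nra. }
  generalize (nrm_shift_avg T l). lra.
Qed.

(* D = inf { B(l,l) : Σ l = 1 }, the squared distance from 0 to the affine
   hull of the e_t; it exists by completeness of ℝ. *)
Definition neg_sq_norms : R -> Prop := fun y => exists l, Ev (fun _ => 1) l = 1 /\ y = - B l l.
Lemma neg_sq_norms_bound : bound neg_sq_norms.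
Proof. exists 0. intros y [l [_ Hy]]. generalize (B_psd l); lra. Qed.
Lemma neg_sq_norms_inhabited : exists y, neg_sq_norms y.
Proof.
  exists (- B ((1, 0%nat) :: nil) ((1, 0%nat) :: nil)).
  exists ((1, 0%nat) :: nil). split; auto. unfold Ev; simpl; ring.
Qed.
Definition Dinf : R :=
  - proj1_sig (completeness neg_sq_norms neg_sq_norms_bound neg_sq_norms_inhabited).

Lemma Dinf_le l : Ev (fun _ => 1) l = 1 -> Dinf <= B l l.
Proof.
  intros H. unfold Dinf. destruct (completeness _ _ _) as [m [Hub Hl]]. simpl.
  assert (- B l l <= m) by (apply Hub; exists l; auto). lra.
Qed.
Lemma Dinf_nonneg : 0 <= Dinf.
Proof.
  unfold Dinf. destruct (completeness _ _ _) as [m [Hub Hl]]. simpl.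
  assert (m <= 0) by (apply Hl; intros y [l [_ Hy]]; generalize (B_psd l); lra). lra.
Qed.
Lemma Dinf_approx eps : 0 < eps -> exists l, Ev (fun _ => 1) l = 1 /\ B l l < Dinf + eps.
Proof.
  intros He. unfold Dinf. destruct (completeness _ _ _) as [m [Hub Hl]]. simpl.
  apply Classical_Prop.NNPP. intros Hn.
  assert (m <= m - eps); [|lra].
  apply Hl. intros y [l [Hs ->]].
  destruct (Rle_dec (- B l l) (m - eps)); auto. exfalso; apply Hn. exists l; split; auto. lra.
Qed.

Lemma nrm_avg_eventually eta : 0 < eta ->
  exists N, forall T, (N <= T)%nat -> nrm (avg T) <= sqrt Dinf + eta.
Proof.
  intros Heta.
  destruct (Dinf_approx ((eta / 2) * (eta / 2))) as [l [Hs Hl]]; [nra|].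
  assert (Hnl : nrm l <= sqrt Dinf + eta / 2).
  { unfold nrm. eapply Rle_trans; [apply sqrt_le_1_alt; left; apply Hl|].
    apply sqrt_add_square_le; [apply Dinf_nonneg | lra]. }
  destruct (inv_succ_small (fcost l * (2 * sqrt (G 0 0))) (eta / 2)) as [N HN]; [|lra|].
  { generalize (fcost_nonneg l) (sqrt_pos (G 0 0)). nra. }
  exists N. intros T HT. eapply Rle_trans; [apply (nrm_avg_le T l Hs)|].
  specialize (HN T HT). unfold Rdiv. rewrite <- Rmult_assoc. lra.
Qed.

(* Von Neumann's mean ergodic theorem: the Cesàro averages form a Cauchy
   sequence, by the parallelogram law and the minimality of D. *)
Lemma avg_cauchy delta : 0 < delta -> exists N, forall T T', (N <= T)%nat -> (N <= T')%nat ->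
  B (avg T ++ fneg (avg T')) (avg T ++ fneg (avg T')) <= delta.
Proof.
  intros Hd.
  set (sD := sqrt Dinf).
  assert (HsD : 0 <= sD) by apply sqrt_pos.
  assert (HsD2 : sD * sD = Dinf) by (apply sqrt_sqrt, Dinf_nonneg).
  set (eta := Rmin 1 (delta / (4 * (2 * sD + 1)))).
  assert (Heta : 0 < eta) by (apply Rmin_glb_lt; [lra | apply Rdiv_lt_0_compat; lra]).
  assert (Heta1 : eta <= 1) by apply Rmin_l.
  assert (Heta2 : 4 * eta * (2 * sD + 1) <= delta).
  { assert (eta <= delta / (4 * (2 * sD + 1))) by apply Rmin_r.
    apply (Rmult_le_compat_l (4 * (2 * sD + 1))) in H; [|lra].
    replace (4 * (2 * sD + 1) * (delta / (4 * (2 * sD + 1)))) with delta in H by (field; lra). lra. }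
  destruct (nrm_avg_eventually eta Heta) as [N HN].
  assert (Hav : forall T, (N <= T)%nat -> B (avg T) (avg T) <= (sD + eta) * (sD + eta)).
  { intros T HT. rewrite <- nrm_sq. generalize (HN T HT) (nrm_nonneg (avg T)). fold sD. nra. }
  exists N. intros T T' HT HT'.
  set (mid := fscale (/ 2) (avg T ++ avg T')).
  assert (Hmid : Dinf <= B mid mid).
  { apply Dinf_le. unfold mid. rewrite Ev_scale, Ev_app, !Ev_avg_one. lra. }
  assert (Hpar : B (avg T ++ fneg (avg T')) (avg T ++ fneg (avg T'))
                 = 2 * B (avg T) (avg T) + 2 * B (avg T') (avg T') - 4 * B mid mid).
  { unfold mid, fneg.
    rewrite !B_app_l, !B_app_r, !B_scale_l, !B_scale_r, !B_app_l, !B_app_r, (B_sym (avg T') (avg T)).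
    field. }
  rewrite Hpar. generalize (Hav T HT) (Hav T' HT'). nra.
Qed.

Lemma cesaro_cauchy (h : nat -> R) : (forall l, Ev h l * Ev h l <= B l l) ->
  Cauchy_crit (fun T => / INR (S T) * sum_f_R0 h T).
Proof.
  intros Hh eps He.
  destruct (avg_cauchy (eps * eps / 2)) as [N HN]; [nra|].
  exists N. intros n m Hn Hm. unfold Rdist. rewrite <- !Ev_avg.
  specialize (HN n m Hn Hm). specialize (Hh (avg n ++ fneg (avg m))).
  rewrite Ev_app, Ev_neg in Hh.
  set (x := Ev h (avg n) + - Ev h (avg m)) in *.
  replace (Ev h (avg n) - Ev h (avg m)) with x by (unfold x; ring).
  destruct (Rcase_abs x); [rewrite Rabs_left | rewrite Rabs_right]; nra.
Qed.

End MeanErgodic.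

(* If the times s carry vectors X s of an inner-product space, the kernel
   ⟨X s, X t⟩ induces on a combination l the squared norm of Σ a_i X s_i;
   in particular such a kernel is positive semidefinite. *)
Section Gram.
Variables (V : Type) (vzero : V) (vadd : V -> V -> V) (vscale : R -> V -> V).
Variable ip : V -> V -> R.
Hypothesis ip_linear : forall a x y z, ip (vadd (vscale a x) y) z = a * ip x z + ip y z.
Hypothesis ip_zero : forall z, ip vzero z = 0.
Hypothesis ip_sym : forall x y, ip x y = ip y x.
Variable X : nat -> V.

Fixpoint combine (l : fcomb) : V :=
  match l with nil => vzero | p :: l' => vadd (vscale (fst p) (X (snd p))) (combine l') end.

Lemma ip_combine_l l z : ip (combine l) z = Ev (fun s => ip (X s) z) l.
Proof.
  induction l as [|[a s] l IH]; simpl; [rewrite ip_zero; reflexivity|].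
  rewrite ip_linear, IH. reflexivity.
Qed.

Lemma B_gram (G : nat -> nat -> R) l w :
  (forall s t, In s (map snd l) -> In t (map snd w) -> G s t = ip (X s) (X t)) ->
  B G l w = ip (combine l) (combine w).
Proof.
  intros H. rewrite ip_combine_l. unfold B. apply Ev_ext_in. intros s Hs.
  rewrite ip_sym, ip_combine_l. apply Ev_ext_in. intros t Ht. rewrite ip_sym. auto.
Qed.
End Gram.

Definition rvec := nat -> Dir -> R.
Definition dot_at (w w' : rvec) (k : nat) : R := w k DL * w' k DL + w k DO * w' k DO + w k DR * w' k DR.
Definition dotN (N : nat) (w w' : rvec) : R := sum_f_R0 (dot_at w w') N.
Definition supported (N : nat) (w : rvec) : Prop := forall k d, (N < k)%nat -> w k d = 0.

Lemma supported_mono N M w : supported N w -> (N <= M)%nat -> supported M w.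
Proof. intros H HM k d Hk. apply H; lia. Qed.
Lemma dotN_sym N w w' : dotN N w w' = dotN N w' w.
Proof. unfold dotN; apply sum_eq; intros; unfold dot_at; ring. Qed.
Lemma dotN_supported N M w w' : supported N w' -> (N <= M)%nat -> dotN M w w' = dotN N w w'.
Proof.
  intros Hs H. induction H; auto. unfold dotN in *; simpl. rewrite IHle.
  unfold dot_at. rewrite !(Hs (S m)) by lia. ring.
Qed.
Lemma dotN_nonneg N w : 0 <= dotN N w w.
Proof. apply cond_pos_sum. intros; unfold dot_at; nra. Qed.
Lemma dotN_mono N M w : (N <= M)%nat -> dotN N w w <= dotN M w w.
Proof. intros; apply sum_nonneg_mono; auto. intros; unfold dot_at; nra. Qed.
Lemma coord_sq_le N w i d : (i <= N)%nat -> w i d * w i d <= dotN N w w.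
Proof.
  intros H. eapply Rle_trans; [|apply sum_term_le; [|exact H]].
  - unfold dot_at. destruct d; nra.
  - intros; unfold dot_at; nra.
Qed.
Lemma dotN_linear N a x y z : dotN N (fun k d => a * x k d + y k d) z = a * dotN N x z + dotN N y z.
Proof. unfold dotN. rewrite <- sum_linear. apply sum_eq; intros; unfold dot_at; ring. Qed.
Lemma dotN_zero N z : dotN N (fun _ _ => 0) z = 0.
Proof.
  unfold dotN. transitivity (sum_f_R0 (fun _ => 0) N); [|apply sum_zero].
  apply sum_eq; intros; unfold dot_at; ring.
Qed.
Lemma dotN_ext N w1 w2 z : (forall k d, w1 k d = w2 k d) -> dotN N w1 z = dotN N w2 z.
Proof. intros H; unfold dotN; apply sum_eq; intros; unfold dot_at; rewrite !H; auto. Qed.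
Lemma dotN_cauchy_schwarz N x y : dotN N x y * dotN N x y <= dotN N x x * dotN N y y.
Proof.
  apply discriminant_le; try apply dotN_nonneg. intros l.
  generalize (dotN_nonneg N (fun k d => l * y k d + x k d)).
  rewrite dotN_linear, dotN_sym, dotN_linear, (dotN_sym N x (fun k d => l * y k d + x k d)),
    dotN_linear, (dotN_sym N y x).
  lra.
Qed.
Lemma dotN_avg_r M w (y : nat -> rvec) c T :
  dotN M w (fun k d => c * sum_f_R0 (fun s => y s k d) T) = c * sum_f_R0 (fun s => dotN M w (y s)) T.
Proof.
  induction T; simpl sum_f_R0.
  - unfold dotN. rewrite scal_sum. apply sum_eq; intros; unfold dot_at; ring.
  - rewrite dotN_sym, (dotN_ext _ _ (fun k d => c * y (S T) k d + c * sum_f_R0 (fun s => y s k d) T))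
      by (intros; ring).
    rewrite dotN_linear, (dotN_sym M (fun k d => c * sum_f_R0 (fun s => y s k d) T) w), IHT,
      (dotN_sym M (y (S T)) w).
    ring.
Qed.
Lemma dotN_cv M (y : nat -> rvec) (z : rvec) :
  (forall k d, Un_cv (fun n => y n k d) (z k d)) -> Un_cv (fun n => dotN M (y n) (y n)) (dotN M z z).
Proof.
  intros H. induction M; unfold dotN, dot_at in *; simpl sum_f_R0;
    [|apply CV_plus; [assumption|]]; repeat apply CV_plus; apply CV_mult; apply H.
Qed.

Definition kvec := nat -> Dir -> nat -> Dir -> R.
Definition dsum (f : Dir -> R) : R := f DL + f DO + f DR.
Definition dot_pair (K1 K2 : kvec) (k k' : nat) : R :=
  dsum (fun d => dsum (fun d' => K1 k d k' d' * K2 k d k' d')).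
Definition dotK (M : nat) (K1 K2 : kvec) : R :=
  sum_f_R0 (fun k => sum_f_R0 (fun k' => dot_pair K1 K2 k k') M) M.
Definition tensor_sq (x : rvec) : kvec := fun k d k' d' => x k d * x k' d'.

Lemma dotK_tensor_sq M x y : dotK M (tensor_sq x) (tensor_sq y) = dotN M x y * dotN M x y.
Proof.
  unfold dotK, dotN. rewrite (scal_sum (dot_at x y) M (sum_f_R0 (dot_at x y) M)).
  apply sum_eq; intros k _. rewrite (scal_sum (dot_at x y) M (dot_at x y k)).
  apply sum_eq; intros k' _. unfold dot_pair, dsum, tensor_sq, dot_at; ring.
Qed.
Lemma dotK_linear M a x y z :
  dotK M (fun k d k' d' => a * x k d k' d' + y k d k' d') z = a * dotK M x z + dotK M y z.
Proof.
  unfold dotK. rewrite <- sum_linear. apply sum_eq; intros.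
  rewrite <- sum_linear. apply sum_eq; intros. unfold dot_pair, dsum; ring.
Qed.
Lemma dotK_zero M z : dotK M (fun _ _ _ _ => 0) z = 0.
Proof.
  unfold dotK. transitivity (sum_f_R0 (fun _ => 0) M); [|apply sum_zero]. apply sum_eq; intros.
  transitivity (sum_f_R0 (fun _ => 0) M); [|apply sum_zero]. apply sum_eq; intros.
  unfold dot_pair, dsum; ring.
Qed.
Lemma dotK_sym M x y : dotK M x y = dotK M y x.
Proof. unfold dotK; apply sum_eq; intros; apply sum_eq; intros; unfold dot_pair, dsum; ring. Qed.
Lemma dotK_nonneg M x : 0 <= dotK M x x.
Proof. apply cond_pos_sum; intros; apply cond_pos_sum; intros; unfold dot_pair, dsum. nra. Qed.
Lemma diag_sq_le_dotK M (K : kvec) i d : (i <= M)%nat -> K i d i d * K i d i d <= dotK M K K.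
Proof.
  intros H. unfold dotK.
  eapply Rle_trans; [|apply sum_term_le; [|exact H]].
  - eapply Rle_trans; [|apply sum_term_le; [|exact H]].
    + unfold dot_pair, dsum. destruct d; nra.
    + intros; unfold dot_pair, dsum; nra.
  - intros; apply cond_pos_sum; intros; unfold dot_pair, dsum; nra.
Qed.

(** The walk operator on real vectors *)

(* U has real matrix entries; [walk_step] is U acting on ℝ-valued vectors. *)
Section Walk.
Variables p q r : nat -> R.
Hypothesis Hp : forall j, 0 < p j.
Hypothesis Hq0 : q 0%nat = 0.
Hypothesis Hq : forall j, (1 <= j)%nat -> 0 < q j.
Hypothesis Hr : forall j, 0 <= r j.
Hypothesis Hq' : forall j, 0 <= q j.
Hypothesis Hsum : forall j, p j + q j + r j = 1.

Let am := amp p q r.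

Lemma amp_unit k : am k DL * am k DL + am k DO * am k DO + am k DR * am k DR = 1.
Proof. unfold am; simpl. rewrite !sqrt_sqrt; auto; [generalize (Hsum k); lra | left; auto]. Qed.
Lemma amp_0L : am 0%nat DL = 0.
Proof. unfold am; simpl. rewrite Hq0, sqrt_0; auto. Qed.

Definition acoef (w : rvec) (k : nat) : R := am k DL * w k DL + am k DO * w k DO + am k DR * w k DR.
Definition coin (w : rvec) : rvec := fun k d => 2 * am k d * acoef w k - w k d.
Definition shift (w : rvec) : rvec := fun k d =>
  match d with
  | DR => w (S k) DL
  | DL => match k with O => 0 | S k' => w k' DR end
  | DO => w k DO
  end.
Definition walk_step (w : rvec) : rvec := shift (coin w).
Fixpoint walk (t : nat) (w : rvec) : rvec :=
  match t with O => w | S t' => walk_step (walk t' w) end.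

(* The coin is a reflection at each vertex, hence locally orthogonal. *)
Lemma dot_at_coin w w' k : dot_at (coin w) (coin w') k = dot_at w w' k.
Proof.
  unfold dot_at, coin, acoef. generalize (amp_unit k). intros H.
  set (aL := am k DL) in *. set (aO := am k DO) in *. set (aR := am k DR) in *.
  transitivity (4 * (aL * w k DL + aO * w k DO + aR * w k DR) * (aL * w' k DL + aO * w' k DO + aR * w' k DR)
                  * (aL * aL + aO * aO + aR * aR - 1) + dot_at w w' k); [unfold dot_at; ring|].
  rewrite H; unfold dot_at; ring.
Qed.
Lemma coin_0L w : coin w 0%nat DL = - w 0%nat DL.
Proof. unfold coin. rewrite amp_0L; ring. Qed.
Lemma supported_coin N w : supported N w -> supported N (coin w).
Proof. intros H k d Hk. unfold coin, acoef. rewrite !(H k) by auto. ring. Qed.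

Lemma dotN_shift_step M y y' :
  dotN M (shift y) (shift y') + y M DR * y' M DR + y 0%nat DL * y' 0%nat DL
  = dotN M y y' + y (S M) DL * y' (S M) DL.
Proof.
  induction M.
  - unfold dotN, dot_at, shift; simpl. ring.
  - unfold dotN in *. simpl sum_f_R0.
    change (dot_at (shift y) (shift y') (S M)) with
      (y M DR * y' M DR + y (S M) DO * y' (S M) DO + y (S (S M)) DL * y' (S (S M)) DL).
    change (dot_at y y' (S M)) with
      (y (S M) DL * y' (S M) DL + y (S M) DO * y' (S M) DO + y (S M) DR * y' (S M) DR).
    lra.
Qed.

(* Unitarity of U, seen on truncations: one step of the walk preserves
   inner products except for the discarded boundary arc |0;L⟩. *)
Lemma dotN_walk_step N w w' : supported N w' ->
  dotN (S N) (walk_step w) (walk_step w') = dotN N w w' - w 0%nat DL * w' 0%nat DL.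
Proof.
  intros Hs. apply supported_coin in Hs as Hc. unfold walk_step.
  generalize (dotN_shift_step (S N) (coin w) (coin w')).
  rewrite (Hc (S N)), (Hc (S (S N))) by lia.
  rewrite (dotN_supported N (S N) (coin w) (coin w') Hc) by lia.
  replace (dotN N (coin w) (coin w')) with (dotN N w w') by (apply sum_eq; intros; symmetry; apply dot_at_coin).
  rewrite !coin_0L. lra.
Qed.
Lemma supported_walk_step N w : supported N w -> supported (S N) (walk_step w).
Proof.
  intros H k d Hk. apply supported_coin in H. unfold walk_step, shift.
  destruct d; [destruct k|..]; try lia; apply H; lia.
Qed.
Lemma walk_step_linear a x y k d :
  walk_step (fun k d => a * x k d + y k d) k d = a * walk_step x k d + walk_step y k d.
Proof. unfold walk_step, shift, coin, acoef. destruct d; [destruct k|..]; ring. Qed.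
Lemma walk_step_ext x y : (forall k d, x k d = y k d) -> forall k d, walk_step x k d = walk_step y k d.
Proof. intros H k d. unfold walk_step, shift, coin, acoef. destruct d; [destruct k|..]; rewrite ?H; ring. Qed.
Lemma walk_step_zero k d : walk_step (fun _ _ => 0) k d = 0.
Proof. unfold walk_step, shift, coin, acoef. destruct d; [destruct k|..]; ring. Qed.
Lemma walk_step_sum (y : nat -> rvec) c T k d :
  walk_step (fun k d => c * sum_f_R0 (fun s => y s k d) T) k d = c * sum_f_R0 (fun s => walk_step (y s) k d) T.
Proof.
  revert k d; induction T; intros k d; simpl sum_f_R0.
  - rewrite (walk_step_ext _ (fun k d => c * y 0%nat k d + 0)) by (intros; ring).
    rewrite walk_step_linear, walk_step_zero. ring.
  - rewrite (walk_step_ext _ (fun k d => c * y (S T) k d + c * sum_f_R0 (fun s => y s k d) T))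
      by (intros; ring).
    rewrite walk_step_linear, IHT. ring.
Qed.
Lemma walk_step_cv (y : nat -> rvec) (z : rvec) k d :
  (forall k' d', Un_cv (fun n => y n k' d') (z k' d')) ->
  Un_cv (fun n => walk_step (y n) k d) (walk_step z k d).
Proof.
  intros H.
  assert (Hc : forall k d, Un_cv (fun n => coin (y n) k d) (coin z k d)).
  { intros k' d'. unfold coin, acoef.
    apply CV_minus; [|apply H]. apply CV_mult; [apply Un_cv_const|].
    repeat apply CV_plus; apply CV_mult; try apply Un_cv_const; apply H. }
  unfold walk_step, shift. destruct d; [destruct k|..]; [apply Un_cv_const | apply Hc..].
Qed.

(* x_t = U^t u for u supported on 0..j and vanishing on |0;L⟩.  Its Gram
   kernel ⟨x_s, x_t⟩ is stationary, so the mean ergodic theorem applies. *)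
Section Orbit.
Variable j : nat.
Variable u : rvec.
Hypothesis u_supp : supported j u.
Hypothesis u_0L : u 0%nat DL = 0.

Definition orbit (t : nat) : rvec := walk t u.

Lemma supported_orbit t : supported (j + t) (orbit t).
Proof.
  induction t; unfold orbit in *; simpl; [rewrite Nat.add_0_r; auto|].
  rewrite <- plus_n_Sm; apply supported_walk_step; auto.
Qed.
Lemma orbit_0L t : orbit t 0%nat DL = 0.
Proof. destruct t; unfold orbit; simpl; auto. Qed.

(* ⟨x_s, x_t⟩, computed on a window containing both supports. *)
Definition gram (s t : nat) : R := dotN (j + s + t) (orbit s) (orbit t).

Lemma gram_window M s t : (j + t <= M)%nat -> dotN M (orbit s) (orbit t) = gram s t.
Proof.
  intros H. unfold gram.
  rewrite (dotN_supported (j + t) M), (dotN_supported (j + t) (j + s + t)); auto;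
    try apply supported_orbit; lia.
Qed.
Lemma gram_sym s t : gram s t = gram t s.
Proof. unfold gram at 1. rewrite dotN_sym. apply gram_window. lia. Qed.
Lemma gram_shift s t : gram (S s) (S t) = gram s t.
Proof.
  rewrite <- (gram_window (S (j + s + t))) by lia. unfold orbit; simpl.
  rewrite dotN_walk_step; [|apply (supported_mono (j + t)); [apply supported_orbit | lia]].
  fold (orbit s) (orbit t). rewrite orbit_0L, gram_window by lia. ring.
Qed.

Definition orbit_comb (l : fcomb) : rvec := fun k d => Ev (fun s => orbit s k d) l.

Definition max_time (l : fcomb) : nat := fold_right (fun p m => Nat.max (snd p) m) 0%nat l.
Lemma max_time_in l s : In s (map snd l) -> (s <= max_time l)%nat.
Proof.
  induction l; simpl; intros H; [contradiction|].
  destruct H as [H|H]; [subst; lia | apply IHl in H; lia].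
Qed.

Lemma B_gram_dotN l M : (j + 2 * max_time l <= M)%nat -> B gram l l = dotN M (orbit_comb l) (orbit_comb l).
Proof.
  intros H.
  assert (Hc : forall k d, combine rvec (fun _ _ => 0) (fun a b k d => a k d + b k d)
                  (fun c a k d => c * a k d) orbit l k d = orbit_comb l k d).
  { clear H. induction l as [|[a s] l IH]; intros k d; [reflexivity|].
    simpl. rewrite IH. reflexivity. }
  rewrite (B_gram rvec (fun _ _ => 0) (fun a b k d => a k d + b k d) (fun c a k d => c * a k d) (dotN M) (dotN_linear M) (dotN_zero M) (dotN_sym M) orbit).
  - unfold dotN. apply sum_eq; intros; unfold dot_at; rewrite !Hc; reflexivity.
  - intros s t Hs Ht. apply max_time_in in Hs; apply max_time_in in Ht.
    symmetry; apply gram_window; lia.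
Qed.
Lemma gram_psd l : 0 <= B gram l l.
Proof. rewrite (B_gram_dotN l (j + 2 * max_time l)) by lia. apply dotN_nonneg. Qed.
Lemma gram_dominates_coord i d l :
  Ev (fun s => orbit s i d) l * Ev (fun s => orbit s i d) l <= B gram l l.
Proof.
  rewrite (B_gram_dotN l (i + j + 2 * max_time l)) by lia.
  apply (coord_sq_le _ (orbit_comb l)). lia.
Qed.
Lemma gram_dominates_dotN l M : dotN M (orbit_comb l) (orbit_comb l) <= B gram l l.
Proof.
  rewrite (B_gram_dotN l (M + j + 2 * max_time l)) by lia. apply dotN_mono. lia.
Qed.

Lemma orbit_coord_sq_le t k d : orbit t k d * orbit t k d <= gram 0 0.
Proof.
  assert (Hd : forall n, gram n n = gram 0 0) by (induction n; auto; rewrite gram_shift; auto).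
  destruct (Compare_dec.le_lt_dec k (j + t)) as [Hk|Hk].
  - eapply Rle_trans; [apply (coord_sq_le (j + t)); auto|].
    rewrite gram_window, Hd by lia. lra.
  - rewrite (supported_orbit t k d Hk). generalize (dotN_nonneg (j + 0 + 0) (orbit 0)).
    unfold gram. lra.
Qed.

Definition orbit_avg (T : nat) : rvec := fun k d => / INR (S T) * sum_f_R0 (fun s => orbit s k d) T.

Lemma orbit_avg_cauchy i d : Cauchy_crit (fun T => orbit_avg T i d).
Proof.
  apply (cesaro_cauchy gram gram_sym gram_shift gram_psd (fun s => orbit s i d)).
  intros l; apply gram_dominates_coord.
Qed.
Lemma orbit_avg_cauchy_norm delta : 0 < delta -> exists N, forall T T', (N <= T)%nat -> (N <= T')%nat ->
  forall M, dotN M (fun k d => orbit_avg T k d - orbit_avg T' k d)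
                   (fun k d => orbit_avg T k d - orbit_avg T' k d) <= delta.
Proof.
  intros Hd. destruct (avg_cauchy gram gram_sym gram_shift gram_psd delta Hd) as [N HN].
  exists N. intros T T' HT HT' M. eapply Rle_trans; [|apply (HN T T' HT HT')].
  eapply Rle_trans; [|apply gram_dominates_dotN].
  right. unfold dotN; apply sum_eq; intros; unfold dot_at, orbit_avg, orbit_comb.
  rewrite !Ev_app, !Ev_neg, !Ev_avg. ring.
Qed.

(* The Gram kernel of the tensor squares x_t ⊗ x_t is ⟨x_s,x_t⟩²; it
   controls the Cesàro means of the squared coordinates. *)
Definition gram_sq (s t : nat) : R := gram s t * gram s t.

Lemma B_gram_sq_dotK l M : (j + 2 * max_time l <= M)%nat ->
  B gram_sq l l = dotK M (fun k d k' d' => Ev (fun s => orbit s k d * orbit s k' d') l)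
                         (fun k d k' d' => Ev (fun s => orbit s k d * orbit s k' d') l).
Proof.
  intros H.
  assert (Hc : forall k d k' d', combine kvec (fun _ _ _ _ => 0) (fun a b k d k' d' => a k d k' d' + b k d k' d')
                  (fun c a k d k' d' => c * a k d k' d') (fun s => tensor_sq (orbit s)) l k d k' d'
                  = Ev (fun s => orbit s k d * orbit s k' d') l).
  { clear H. induction l as [|[a s] l IH]; intros k d k' d'; [reflexivity|].
    simpl. rewrite IH. reflexivity. }
  rewrite (B_gram kvec (fun _ _ _ _ => 0) (fun a b k d k' d' => a k d k' d' + b k d k' d')
                     (fun c a k d k' d' => c * a k d k' d') (dotK M) (dotK_linear M) (dotK_zero M) (dotK_sym M) (fun s => tensor_sq (orbit s))).
  - unfold dotK. apply sum_eq; intros; apply sum_eq; intros. unfold dot_pair, dsum. rewrite !Hc. reflexivity.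
  - intros s t Hs Ht. apply max_time_in in Hs; apply max_time_in in Ht.
    rewrite dotK_tensor_sq. unfold gram_sq. rewrite gram_window; auto; lia.
Qed.

Lemma orbit_sq_avg_cauchy i d :
  Cauchy_crit (fun T => / INR (S T) * sum_f_R0 (fun s => orbit s i d * orbit s i d) T).
Proof.
  apply (cesaro_cauchy gram_sq).
  - intros; unfold gram_sq; rewrite gram_sym; auto.
  - intros; unfold gram_sq; rewrite gram_shift; auto.
  - intros l. rewrite (B_gram_sq_dotK l (j + 2 * max_time l)) by lia. apply dotK_nonneg.
  - intros l. rewrite (B_gram_sq_dotK l (i + j + 2 * max_time l)) by lia.
    apply (diag_sq_le_dotK _ (fun k d k' d' => Ev (fun s => orbit s k d * orbit s k' d') l)). lia.
Qed.
End Orbit.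

(** The stationary vector *)

Variable CR : R.
Hypothesis HCR : infinite_sum (CR_term p q) CR.

Lemma prodq_pos k : 0 < prodq q k.
Proof. induction k; simpl; [lra|]. apply Rmult_lt_0_compat; auto. apply Hq; lia. Qed.
Lemma prodp_pos k : 0 < prodp p k.
Proof. induction k; simpl; [lra|]. apply Rmult_lt_0_compat; auto. Qed.
Lemma CR_nonneg : 0 <= CR.
Proof.
  apply (@Rle_cv_lim (fun _ => 0) (sum_f_R0 (CR_term p q))); [|apply Un_cv_const | exact HCR].
  intros n. apply cond_pos_sum. intros; left.
  apply Rdiv_lt_0_compat; [apply prodp_pos | apply prodq_pos].
Qed.

Let pi := pi_stat p q CR.

Lemma pi_eq k : pi k = / (1 + CR) * (prodp p k / prodq q k).
Proof. unfold pi, pi_stat. destruct k; auto. simpl. field. generalize CR_nonneg; lra. Qed.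
Lemma pi_pos k : 0 < pi k.
Proof.
  rewrite pi_eq. apply Rmult_lt_0_compat.
  - apply Rinv_0_lt_compat. generalize CR_nonneg; lra.
  - apply Rdiv_lt_0_compat; [apply prodp_pos | apply prodq_pos].
Qed.
Lemma detailed_balance k : pi (S k) * q (S k) = pi k * p k.
Proof.
  rewrite !pi_eq. simpl. generalize (prodq_pos k) (Hq (S k) ltac:(lia)) CR_nonneg. intros.
  field. repeat split; lra.
Qed.
Lemma pi_partial_sum M : sum_f_R0 pi (S M) = / (1 + CR) * (1 + sum_f_R0 (CR_term p q) M).
Proof.
  induction M.
  - simpl. rewrite !pi_eq. unfold CR_term. simpl. field.
    generalize CR_nonneg (Hq 1 ltac:(lia)); intros; split; lra.
  - rewrite tech5, IHM. simpl sum_f_R0. rewrite pi_eq. unfold CR_term. ring.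
Qed.
Lemma pi_sum_cv : Un_cv (sum_f_R0 pi) 1.
Proof.
  assert (Hlim : Un_cv (fun n => / (1 + CR) * (1 + sum_f_R0 (CR_term p q) n)) (/ (1 + CR) * (1 + CR))).
  { apply CV_mult; [apply Un_cv_const|]. apply CV_plus; [apply Un_cv_const | exact HCR]. }
  rewrite Rinv_l in Hlim by (generalize CR_nonneg; lra).
  apply (CV_shift _ 1). apply (Un_cv_ext _ _ _ (fun n => eq_sym (pi_partial_sum n))) in Hlim.
  apply (Un_cv_ext _ _ _ (fun n => f_equal (sum_f_R0 pi) (eq_sym (Nat.add_1_r n)))). exact Hlim.
Qed.
Lemma pi_partial_le M : sum_f_R0 pi M <= 1.
Proof. apply sum_incr; [apply pi_sum_cv | intros; left; apply pi_pos]. Qed.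

(* Φ(k,d) = √π(k) · (coefficient of a_k on |k;d⟩), i.e. Φ = Σ_k √π(k) a_k. *)
Definition phi (k : nat) : R := sqrt (pi k).
Definition Phi : rvec := fun k d => phi k * am k d.

Lemma phi_pos k : 0 < phi k.
Proof. apply sqrt_lt_R0, pi_pos. Qed.
(* the square root of detailed balance *)
Lemma phi_balance k : am (S k) DL * phi (S k) = am k DR * phi k.
Proof.
  unfold am, phi; simpl.
  rewrite <- !sqrt_mult; try (left; apply pi_pos); try apply Hq'; try (left; apply Hp).
  rewrite (Rmult_comm (q (S k))), detailed_balance, Rmult_comm; auto.
Qed.
Lemma dot_at_Phi k : dot_at Phi Phi k = pi k.
Proof.
  unfold dot_at, Phi.
  transitivity (phi k * phi k * (am k DL * am k DL + am k DO * am k DO + am k DR * am k DR)); [ring|].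
  rewrite amp_unit. unfold phi. rewrite sqrt_sqrt; [ring | left; apply pi_pos].
Qed.
Lemma dotN_Phi M : dotN M Phi Phi = sum_f_R0 pi M.
Proof. apply sum_eq; intros; apply dot_at_Phi. Qed.
Lemma acoef_Phi k : acoef Phi k = phi k.
Proof.
  unfold acoef, Phi.
  transitivity (phi k * (am k DL * am k DL + am k DO * am k DO + am k DR * am k DR)); [ring|].
  rewrite amp_unit. ring.
Qed.
Lemma Phi_0L : Phi 0%nat DL = 0.
Proof. unfold Phi. rewrite amp_0L; ring. Qed.

Lemma walk_step_Phi k d : walk_step Phi k d = Phi k d.
Proof.
  unfold walk_step, shift, coin.
  destruct d; [destruct k|..]; rewrite ?acoef_Phi; unfold Phi.
  - rewrite amp_0L; ring.
  - pose proof (phi_balance k); nra.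
  - ring.
  - pose proof (phi_balance k); nra.
Qed.
Lemma dotN_Phi_walk_step N w : supported N w -> dotN (S N) Phi (walk_step w) = dotN N Phi w.
Proof.
  intros Hs. rewrite (dotN_ext _ Phi (walk_step Phi)) by (intros; rewrite walk_step_Phi; auto).
  rewrite (dotN_walk_step N Phi w Hs), Phi_0L. ring.
Qed.

(* Conversely every U-fixed vector vanishing on |0;L⟩ is a multiple of Φ.
   First, the coefficients ⟨a_k, z⟩ satisfy the same recursion as √π. *)
Section FixedVectors.
Variable z : rvec.
Hypothesis z_fixed : forall k d, walk_step z k d = z k d.
Hypothesis z_0L : z 0%nat DL = 0.

Lemma fixed_acoef_balance k : am (S k) DL * acoef z (S k) = am k DR * acoef z k.
Proof.
  generalize (z_fixed k DR) (z_fixed (S k) DL). unfold walk_step, shift, coin. fold am. lra.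
Qed.
Lemma fixed_acoef k : acoef z k = (acoef z 0 / phi 0) * phi k.
Proof.
  induction k.
  - field. generalize (phi_pos 0); lra.
  - assert (HL : 0 < am (S k) DL) by (unfold am; simpl; apply sqrt_lt_R0, Hq; lia).
    apply (Rmult_eq_reg_l (am (S k) DL)); [|lra].
    rewrite fixed_acoef_balance, IHk.
    replace (am (S k) DL * (acoef z 0 / phi 0 * phi (S k))) with (acoef z 0 / phi 0 * (am (S k) DL * phi (S k)))
      by ring.
    rewrite phi_balance. ring.
Qed.
(* Second, z is locally proportional to a_k: z(k,d) = ⟨a_k,z⟩ a_k(d). *)
Lemma fixed_local k d : z k d = am k d * acoef z k.
Proof.
  assert (HO : forall k, z k DO = am k DO * acoef z k).
  { intros k'. generalize (z_fixed k' DO). unfold walk_step, shift, coin. fold am. lra. }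
  (* if the L-component is proportional, so is the R-component, as a_k is a unit vector *)
  assert (HR : forall k, z k DL = am k DL * acoef z k -> z k DR = am k DR * acoef z k).
  { intros k' HL. assert (HpR : 0 < am k' DR) by (unfold am; simpl; apply sqrt_lt_R0, Hp).
    apply (Rmult_eq_reg_l (am k' DR)); [|lra].
    assert (Hs : acoef z k' = am k' DL * z k' DL + am k' DO * z k' DO + am k' DR * z k' DR)
      by reflexivity.
    rewrite HL, HO in Hs. generalize (f_equal (Rmult (acoef z k')) (amp_unit k')). nra. }
  assert (HL : forall k, z k DL = am k DL * acoef z k).
  { induction k0.
    - rewrite z_0L, amp_0L. ring.
    - rewrite <- z_fixed. unfold walk_step, shift, coin. fold am.
      rewrite (HR k0 IHk0), fixed_acoef_balance. ring. }
  destruct d; auto.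
Qed.
Lemma fixed_multiple_Phi k d : z k d = (acoef z 0 / phi 0) * Phi k d.
Proof. rewrite fixed_local, fixed_acoef. unfold Phi. ring. Qed.
End FixedVectors.

(** The Cesàro limit of an orbit is its projection on Φ *)

Section Limit.
Variable j : nat.
Variable u : rvec.
Hypothesis u_supp : supported j u.
Hypothesis u_0L : u 0%nat DL = 0.

Let x := orbit u.
Let xavg := orbit_avg u.
Definition overlap : R := dotN j Phi u.

Lemma dotN_Phi_orbit t M : (j + t <= M)%nat -> dotN M Phi (x t) = overlap.
Proof.
  revert M. induction t; intros M HM.
  - unfold x, orbit; simpl. rewrite (dotN_supported j M Phi u u_supp); auto. lia.
  - rewrite (dotN_supported (j + S t) M Phi (x (S t))); [|apply supported_orbit; auto | lia].
    rewrite <- plus_n_Sm. unfold x, orbit; simpl.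
    rewrite dotN_Phi_walk_step; [apply IHt; lia | apply supported_orbit; auto].
Qed.

Lemma dotN_Phi_avg T M : (j + T <= M)%nat -> dotN M Phi (xavg T) = overlap.
Proof.
  intros HM. unfold xavg, orbit_avg. rewrite (dotN_avg_r M Phi (orbit u)).
  rewrite (sum_eq _ (fun _ => overlap)) by (intros s Hs; apply dotN_Phi_orbit; lia).
  rewrite sum_cte. field. apply not_0_INR; lia.
Qed.

Definition orbit_lim (k : nat) (d : Dir) : R :=
  proj1_sig (R_complete _ (orbit_avg_cauchy j u u_supp u_0L k d)).
Lemma orbit_avg_cv k d : Un_cv (fun T => xavg T k d) (orbit_lim k d).
Proof. unfold orbit_lim. destruct (R_complete _ _) as [l Hl]. exact Hl. Qed.

Lemma walk_step_avg T k d :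
  walk_step (xavg T) k d = xavg T k d + (x (S T) k d - x 0%nat k d) * / INR (S T).
Proof.
  unfold xavg, orbit_avg, x. rewrite walk_step_sum.
  change (fun s => walk_step (orbit u s) k d) with (fun s => orbit u (S s) k d).
  assert (E : sum_f_R0 (fun s => orbit u (S s) k d) T
              = sum_f_R0 (fun s => orbit u s k d) T + orbit u (S T) k d - orbit u 0%nat k d).
  { induction T as [|T IH].
    - change (orbit u 1 k d = orbit u 0%nat k d + orbit u 1 k d - orbit u 0%nat k d). ring.
    - rewrite !tech5, IH. cbv beta. ring. }
  rewrite E. ring.
Qed.

Lemma orbit_lim_fixed k d : walk_step orbit_lim k d = orbit_lim k d.
Proof.
  apply (UL_sequence (fun T => walk_step (xavg T) k d)); [apply walk_step_cv, orbit_avg_cv|].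
  apply (Un_cv_ext (fun T => xavg T k d + (x (S T) k d - x 0%nat k d) * / INR (S T)));
    [intros; symmetry; apply walk_step_avg|].
  rewrite <- Rplus_0_r. apply CV_plus; [apply orbit_avg_cv|].
  (* the boundary term is O(1/T) because the orbit is bounded *)
  set (b := sqrt (gram j u 0 0)).
  assert (Hb : forall t, Rabs (x t k d) <= b).
  { intros t. unfold b. rewrite <- sqrt_Rsqr_abs. apply sqrt_le_1_alt. unfold Rsqr.
    apply (orbit_coord_sq_le j u u_supp u_0L). }
  intros eps He.
  destruct (inv_succ_small (2 * b) (eps / 2)) as [N HN];
    [generalize (sqrt_pos (gram j u 0 0)); fold b; lra | lra |].
  exists N. intros n Hn. unfold Rdist. rewrite Rminus_0_r, Rabs_mult.
  rewrite (Rabs_right (/ _)) by (left; apply Rinv_0_lt_compat, lt_0_INR; lia).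
  assert (Rabs (x (S n) k d - x 0%nat k d) <= 2 * b).
  { unfold Rminus. eapply Rle_trans; [apply Rabs_triang|]. rewrite Rabs_Ropp.
    generalize (Hb (S n)) (Hb 0%nat). lra. }
  assert (0 < / INR (S n)) by (apply Rinv_0_lt_compat, lt_0_INR; lia).
  specialize (HN n Hn). nra.
Qed.

Definition lim_coef : R := acoef orbit_lim 0 / phi 0.
Lemma orbit_lim_Phi k d : orbit_lim k d = lim_coef * Phi k d.
Proof.
  apply fixed_multiple_Phi; [apply orbit_lim_fixed|].
  rewrite <- (orbit_lim_fixed 0 DL). reflexivity.
Qed.

(* The averages converge to the limit in norm, not only coordinatewise. *)
Lemma avg_close_to_lim delta : 0 < delta -> exists N, forall M,
  dotN M (fun k d => xavg N k d - orbit_lim k d) (fun k d => xavg N k d - orbit_lim k d) <= delta.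
Proof.
  intros Hd. destruct (orbit_avg_cauchy_norm j u u_supp u_0L delta Hd) as [N HN].
  exists N. intros M.
  apply (Un_cv_le_eventually
           (fun T => dotN M (fun k d => xavg N k d - xavg T k d) (fun k d => xavg N k d - xavg T k d)) _ N).
  - apply dotN_cv. intros k d. apply CV_minus; [apply Un_cv_const | apply orbit_avg_cv].
  - intros T HT. apply HN; lia.
Qed.

(* Comparing ⟨Φ, avg⟩ = ⟨Φ,u⟩ with ⟨Φ, lim⟩ identifies the coefficient; this
   is where positive recurrence (Σ π = 1, so Φ ∈ ℓ²) enters. *)
Lemma lim_coef_eq_overlap : lim_coef = overlap.
Proof.
  set (c := lim_coef).
  assert (Hsmall : forall delta, 0 < delta -> (overlap - c) * (overlap - c) <= delta).
  { intros delta Hd. destruct (avg_close_to_lim delta Hd) as [N HN].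
    set (e := fun k d => xavg N k d - orbit_lim k d).
    apply (Un_cv_le_eventually (fun M => (overlap - c * sum_f_R0 pi M) * (overlap - c * sum_f_R0 pi M))
             _ (j + N)).
    - rewrite <- (Rmult_1_r c) at 1 2.
      apply CV_mult; apply CV_minus; try apply Un_cv_const; apply CV_mult;
        [apply Un_cv_const | apply pi_sum_cv | apply Un_cv_const | apply pi_sum_cv].
    - intros M HM.
      assert (E : dotN M Phi e = overlap - c * sum_f_R0 pi M).
      { rewrite <- dotN_Phi, <- (dotN_Phi_avg N M HM). unfold dotN.
        rewrite scal_sum, <- minus_sum. apply sum_eq; intros. unfold e, dot_at.
        rewrite !orbit_lim_Phi. fold c. ring. }
      rewrite <- E. eapply Rle_trans; [apply dotN_cauchy_schwarz|].
      rewrite dotN_Phi. generalize (pi_partial_le M) (HN M) (dotN_nonneg M e)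
                          (cond_pos_sum pi M (fun k => Rlt_le _ _ (pi_pos k))).
      fold e. nra. }
  destruct (Req_dec c overlap) as [|Hne]; auto. exfalso.
  assert (0 < (overlap - c) * (overlap - c)) by (assert (overlap - c <> 0) by lra; nra).
  specialize (Hsmall ((overlap - c) * (overlap - c) / 2) ltac:(lra)). lra.
Qed.

Lemma orbit_avg_limit i d : Un_cv (fun T => xavg T i d) (overlap * Phi i d).
Proof. rewrite <- lim_coef_eq_overlap, <- orbit_lim_Phi. apply orbit_avg_cv. Qed.

(* By Jensen, the Cesàro means of the squared coordinates converge to at
   least the square of the limit of the means. *)
Lemma orbit_sq_avg_lower i d : exists L,
  Un_cv (fun T => / INR (S T) * sum_f_R0 (fun s => x s i d * x s i d) T) L /\
  (overlap * Phi i d) * (overlap * Phi i d) <= L.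
Proof.
  destruct (R_complete _ (orbit_sq_avg_cauchy j u u_supp u_0L i d)) as [L HL].
  exists L. split; [exact HL|].
  apply (@Rle_cv_lim (fun T => xavg T i d * xavg T i d)
           (fun T => / INR (S T) * sum_f_R0 (fun s => x s i d * x s i d) T)).
  - intros n. apply (cesaro_square_le (fun s => x s i d)).
  - apply CV_mult; apply orbit_avg_limit.
  - exact HL.
Qed.
End Limit.

Lemma overlap_concentrated j u : (forall k d, k <> j -> u k d = 0) -> overlap j u = phi j * acoef u j.
Proof.
  intros Hu. unfold overlap, dotN. destruct j as [|j'].
  - simpl. unfold dot_at, Phi, acoef. ring.
  - simpl. rewrite (sum_eq _ (fun _ => 0)), sum_zero.
    + unfold dot_at, Phi, acoef. ring.
    + intros i Hi. unfold dot_at. rewrite !Hu by lia. ring.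
Qed.

Lemma orbit_prob_lower j u : supported j u -> u 0%nat DL = 0 -> forall i, exists L,
  Un_cv (fun T => / INR (S T) * sum_f_R0 (fun t => dsum (fun d => orbit u t i d * orbit u t i d)) T) L /\
  overlap j u * overlap j u * pi i <= L.
Proof.
  intros Hs H0 i.
  destruct (orbit_sq_avg_lower j u Hs H0 i DL) as [L1 [C1 B1]].
  destruct (orbit_sq_avg_lower j u Hs H0 i DO) as [L2 [C2 B2]].
  destruct (orbit_sq_avg_lower j u Hs H0 i DR) as [L3 [C3 B3]].
  exists (L1 + L2 + L3). split.
  - eapply Un_cv_ext; [|exact (CV_plus _ _ _ _ (CV_plus _ _ _ _ C1 C2) C3)].
    intros T. unfold dsum. rewrite !mean_plus. reflexivity.
  - rewrite <- (dot_at_Phi i). unfold dot_at. nra.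
Qed.

(** Complex initial states *)

Definition re_part (Psi : vec) : rvec := fun k d => Cre (Psi k d).
Definition im_part (Psi : vec) : rvec := fun k d => Cim (Psi k d).

Lemma Uop_parts Psi k d :
  Cre (Uop p q r Psi k d) = walk_step (re_part Psi) k d /\
  Cim (Uop p q r Psi k d) = walk_step (im_part Psi) k d.
Proof.
  unfold Uop, Shift, Coin, PiA, inner_a, walk_step, shift, coin, acoef, re_part, im_part.
  destruct d; [destruct k|..]; simpl; split; ring.
Qed.
Lemma Upow_parts t Psi k d :
  Cre (Upow p q r t Psi k d) = orbit (re_part Psi) t k d /\
  Cim (Upow p q r t Psi k d) = orbit (im_part Psi) t k d.
Proof.
  revert k d. induction t; intros k d; [split; reflexivity|].
  simpl. destruct (Uop_parts (Upow p q r t Psi) k d) as [-> ->].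
  split; apply walk_step_ext; intros; apply IHt.
Qed.
Lemma prob_parts Psi t i : prob p q r Psi t i =
  dsum (fun d => orbit (re_part Psi) t i d * orbit (re_part Psi) t i d) +
  dsum (fun d => orbit (im_part Psi) t i d * orbit (im_part Psi) t i d).
Proof.
  unfold prob, Cnorm2, dsum.
  destruct (Upow_parts t Psi i DL) as [-> ->], (Upow_parts t Psi i DO) as [-> ->],
    (Upow_parts t Psi i DR) as [-> ->].
  ring.
Qed.

Lemma init_part (f : Cx -> R) j bL bO bR : f C0 = 0 -> (j = 0%nat -> bL = C0) ->
  let w := fun k d => f (init j bL bO bR k d) in
  (forall k d, k <> j -> w k d = 0) /\ supported j w /\ w 0%nat DL = 0.
Proof.
  intros Hf Hj w.
  assert (Hw : forall k d, k <> j -> w k d = 0).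
  { intros k d Hk. unfold w, init. apply Nat.eqb_neq in Hk. rewrite Hk. exact Hf. }
  repeat split; auto.
  - intros k d Hk. apply Hw. lia.
  - unfold w, init. destruct j; [rewrite Hj by auto; exact Hf | apply Hf].
Qed.

Lemma cesaro_lower_bound j bL bO bR : (j = 0%nat -> bL = C0) -> forall i, exists l,
  Un_cv (cesaro p q r (init j bL bO bR) i) l /\
  l >= Cnorm2 (inner_a p q r j (init j bL bO bR)) * pi i * pi j.
Proof.
  intros Hj i. set (Psi := init j bL bO bR).
  destruct (init_part Cre j bL bO bR eq_refl Hj) as [Cu [Su Zu]].
  destruct (init_part Cim j bL bO bR eq_refl Hj) as [Cv [Sv Zv]].
  destruct (orbit_prob_lower j (re_part Psi) Su Zu i) as [Lu [HLu Bu]].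
  destruct (orbit_prob_lower j (im_part Psi) Sv Zv i) as [Lv [HLv Bv]].
  exists (Lu + Lv). split.
  - eapply Un_cv_ext; [|exact (CV_plus _ _ _ _ HLu HLv)].
    intros T. unfold cesaro. rewrite <- mean_plus. f_equal. apply sum_eq. intros t _.
    symmetry; apply prob_parts.
  - rewrite (overlap_concentrated j (re_part Psi) Cu) in Bu.
    rewrite (overlap_concentrated j (im_part Psi) Cv) in Bv.
    replace (Cnorm2 (inner_a p q r j Psi))
      with (acoef (re_part Psi) j * acoef (re_part Psi) j + acoef (im_part Psi) j * acoef (im_part Psi) j)
      by (unfold Cnorm2, inner_a, Cadd, Cscal, acoef, re_part, im_part; simpl; ring).
    assert (Hphi : phi j * phi j = pi j) by (apply sqrt_sqrt; left; apply pi_pos).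
    apply Rle_ge. generalize (pi_pos i). nra.
Qed.

(* a_j itself is such a state, with |⟨a_j,a_j⟩|² = 1: every vertex keeps a
   positive time-averaged probability (localization). *)
Lemma localization j i : exists l, Un_cv (cesaro p q r (avec p q r j) i) l /\ l > 0.
Proof.
  set (b := fun d => mkCx (am j d) 0).
  assert (Ea : avec p q r j = init j (b DL) (b DO) (b DR)).
  { apply functional_extensionality; intros k. apply functional_extensionality; intros d.
    unfold avec, init. destruct (Nat.eqb k j) eqn:E; [|reflexivity].
    apply Nat.eqb_eq in E; subst. destruct d; reflexivity. }
  destruct (cesaro_lower_bound j (b DL) (b DO) (b DR)) with (i := i) as [l [Hl Hb]].
  { intros ->. unfold b, C0. rewrite amp_0L. reflexivity. }
  exists l. rewrite Ea. split; [exact Hl|].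
  replace (Cnorm2 (inner_a p q r j (init j (b DL) (b DO) (b DR)))) with 1 in Hb.
  - generalize (pi_pos i) (pi_pos j). nra.
  - generalize (amp_unit j). intros H.
    unfold Cnorm2, inner_a, init, Cadd, Cscal, b. rewrite Nat.eqb_refl. cbn [Cre Cim].
    unfold am in *.
    replace (amp p q r j DL * amp p q r j DL + (amp p q r j DO * amp p q r j DO + amp p q r j DR * amp p q r j DR))
      with 1 by lra.
    ring.
Qed.
End Walk.

Theorem theorem1 (p q r : nat -> R)
  (Hp : forall j, 0 < p j) (Hq0 : q 0%nat = 0)
  (Hq : forall j, (1 <= j)%nat -> 0 < q j)
  (Hr : forall j, 0 <= r j) (Hq' : forall j, 0 <= q j)
  (Hsum : forall j, p j + q j + r j = 1)
  (CR : R) (HCR : infinite_sum (CR_term p q) CR) :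
  (forall (j : nat) (bL bO bR : Cx),
     (j = 0%nat -> bL = C0) ->
     (r j = 0 -> bO = C0) ->
     Cnorm2 bL + Cnorm2 bO + Cnorm2 bR = 1 ->
     forall i : nat,
       exists l : R,
         Un_cv (cesaro p q r (init j bL bO bR) i) l /\
         l >= Cnorm2 (inner_a p q r j (init j bL bO bR))
               * pi_stat p q CR i * pi_stat p q CR j)
  /\
  (forall j i : nat,
     exists l : R, Un_cv (cesaro p q r (avec p q r j) i) l /\ l > 0).
Proof.
  split.
  - intros j bL bO bR Hj _ _. eapply cesaro_lower_bound; eauto.
  - intros j i. eapply localization; eauto.
Qed.
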